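(* Let $(\Omega,+)$ be a group and $a,b$ subgroups with $a\top b$. Identify $\Omega$ with $a\times b$ via the bijection $(\alpha,\beta)\mapsto\alpha+\beta$, so that every subset of $\Omega$ is a relation between $a$ and $b$. For $x,y,z\subseteq\Omega$ define the ternary composition of relations $z\circ y^{-1}\circ x:=\{\alpha'+\beta' : \alpha'\in a,\beta'\in b,\ \exists \alpha''\in a,\beta''\in b \text{ with } \alpha''+\beta''\in y,\ \alpha'+\beta''\in x,\ \alpha''+\beta'\in z\}$. Then $z\circ y^{-1}\circ x=\Gamma(x,a,y,b,z)$ for all $x,y,z\subseteq\Omega$. If moreover $a$ and $b$ commute (every element of $a$ commutes with every element of $b$), then the set of subgroups of $\Omega$ is stable under this ternary law.
   Context: $(\Omega,+)$ is a group written additively but not necessarily abelian. For subsets $x,y\subseteq\Omega$, $x\top y$ means every $\omega\in\Omega$ has a unique decomposition $\omega=\xi+\eta$ with $\xi\in x$, $\eta\in y$. For subsets $x,a,y,b,z$: $\Gamma(x,a,y,b,z)=\{\omega\in\Omega:\exists\alpha\in a,\beta\in b:\ \alpha+\omega+\beta\in y,\ \alpha+\omega\in z,\ \omega+\beta\in x\}$. *)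

(* an abstract (possibly infinite, non-abelian) group written
   additively, given by its carrier and operations; subsets are predicates. *)

Set Implicit Arguments.

Definition is_group (T : Type) (add : T -> T -> T) (zero : T) (opp : T -> T) : Prop :=
  (forall x y z, add x (add y z) = add (add x y) z) /\
  (forall x, add zero x = x) /\ (forall x, add x zero = x) /\
  (forall x, add (opp x) x = zero) /\ (forall x, add x (opp x) = zero).

Definition is_subgroup (T : Type) (add : T -> T -> T) (zero : T) (opp : T -> T)
  (s : T -> Prop) : Prop :=
  s zero /\ (forall u v, s u -> s v -> s (add u v)) /\ (forall u, s u -> s (opp u)).

Definition top (T : Type) (add : T -> T -> T) (x y : T -> Prop) : Prop :=
  forall w, exists xi eta, x xi /\ y eta /\ w = add xi eta /\
    forall xi' eta', x xi' -> y eta' -> w = add xi' eta' -> xi' = xi /\ eta' = eta.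

Definition Gamma (T : Type) (add : T -> T -> T) (x a y b z : T -> Prop) : T -> Prop :=
  fun w => exists al be, a al /\ b be /\
    y (add (add al w) be) /\ z (add al w) /\ x (add w be).

Definition tcomp (T : Type) (add : T -> T -> T) (a b x y z : T -> Prop) : T -> Prop :=
  fun w => exists al' be', a al' /\ b be' /\ w = add al' be' /\
    exists al'' be'', a al'' /\ b be'' /\
      y (add al'' be'') /\ x (add al' be'') /\ z (add al'' be').

From Stdlib Require Import FunctionalExtensionality PropExtensionality.

Set Implicit Arguments.

(* Writing w = α' + β', a witness (α, β) of w ∈ Γ(x,a,y,b,z) and a witness
   (α'', β'') of w ∈ z ∘ y⁻¹ ∘ x determine each other through
   α'' = α + α' and β'' = β' + β.  When a and b commute, (α, β) ↦ α + β is a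
   group morphism a × b → Ω, so the defining conditions of z ∘ y⁻¹ ∘ x are
   preserved by componentwise sums and opposites of witnesses. *)

Section GroupLaws.
Variables (T : Type) (add : T -> T -> T) (zero : T) (opp : T -> T).
Hypothesis group : is_group add zero opp.

Lemma addA u v w : add u (add v w) = add (add u v) w.
Proof. apply group. Qed.

Lemma add0r u : add zero u = u.
Proof. apply group. Qed.

Lemma addr0 u : add u zero = u.
Proof. apply group. Qed.

Lemma addNr u : add (opp u) u = zero.
Proof. apply group. Qed.

Lemma addrN u : add u (opp u) = zero.
Proof. apply group. Qed.

Lemma addKr u v : add (opp u) (add u v) = v.
Proof. now rewrite addA, addNr, add0r. Qed.

Lemma addNKr u v : add u (add (opp u) v) = v.
Proof. now rewrite addA, addrN, add0r. Qed.

Lemma addrK u v : add (add v u) (opp u) = v.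
Proof. now rewrite <- addA, addrN, addr0. Qed.

Lemma oppD u v : opp (add u v) = add (opp v) (opp u).
Proof.
  assert (Hinv : add (add u v) (add (opp v) (opp u)) = zero).
  { now rewrite addA, addrK, addrN. }
  transitivity (add (opp (add u v)) (add (add u v) (add (opp v) (opp u)))).
  - now rewrite Hinv, addr0.
  - apply addKr.
Qed.

Lemma add_interchange p q r s :
  add q r = add r q -> add (add p q) (add r s) = add (add p r) (add q s).
Proof. intros Hqr. now rewrite <- !addA, (addA q r), Hqr, <- addA. Qed.

Lemma oppD_comm u v : add u v = add v u -> opp (add u v) = add (opp u) (opp v).
Proof.
  intros Huv. rewrite oppD.
  (* Both sides are opposites of [u + v = v + u]. *)
  now rewrite <- (oppD v u), <- Huv, oppD.
Qed.

End GroupLaws.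

Section TernaryComposition.
Variables (T : Type) (add : T -> T -> T) (zero : T) (opp : T -> T).
Variables a b : T -> Prop.
Hypothesis group : is_group add zero opp.
Hypothesis a_subgroup : is_subgroup add zero opp a.
Hypothesis b_subgroup : is_subgroup add zero opp b.

Lemma tcomp_sub_Gamma (x y z : T -> Prop) w :
  tcomp add a b x y z w -> Gamma add x a y b z w.
Proof.
  destruct a_subgroup as [_ [aD aN]], b_subgroup as [_ [bD bN]].
  intros [al' [be' [ha' [hb' [-> [al'' [be'' [ha'' [hb'' [hy [hx hz]]]]]]]]]]].
  exists (add al'' (opp al')), (add (opp be') be'').
  repeat split; auto.
  - replace (add (add (add al'' (opp al')) (add al' be')) (add (opp be') be''))
      with (add al'' be''); auto.
    now rewrite <- (addA group al''), (addKr group), <- (addA group), (addNKr group).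
  - now rewrite <- (addA group al''), (addKr group).
  - now rewrite <- (addA group al'), (addNKr group).
Qed.

Lemma Gamma_sub_tcomp (x y z : T -> Prop) w :
  top add a b -> Gamma add x a y b z w -> tcomp add a b x y z w.
Proof.
  destruct a_subgroup as [_ [aD _]], b_subgroup as [_ [bD _]].
  intros Htop [al [be [ha [hb [hy [hz hx]]]]]].
  destruct (Htop w) as [al' [be' [ha' [hb' [-> _]]]]].
  exists al', be'; repeat split; auto.
  exists (add al al'), (add be' be); repeat split; auto.
  - now rewrite !(addA group) in *.
  - now rewrite (addA group).
  - now rewrite (addA group) in hz.
Qed.

Lemma tcompE (x y z : T -> Prop) :
  top add a b -> tcomp add a b x y z = Gamma add x a y b z.
Proof.
  intros Htop. apply functional_extensionality; intros w.
  apply propositional_extensionality; split.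
  - apply tcomp_sub_Gamma.
  - now apply Gamma_sub_tcomp.
Qed.

Hypothesis a_b_commute : forall al be, a al -> b be -> add al be = add be al.
Variables x y z : T -> Prop.
Hypothesis x_subgroup : is_subgroup add zero opp x.
Hypothesis y_subgroup : is_subgroup add zero opp y.
Hypothesis z_subgroup : is_subgroup add zero opp z.

Lemma tcomp0 : tcomp add a b x y z zero.
Proof.
  destruct a_subgroup as [a0 _], b_subgroup as [b0 _],
    x_subgroup as [x0 _], y_subgroup as [y0 _], z_subgroup as [z0 _].
  exists zero, zero; repeat split; auto.
  { now rewrite (add0r group). }
  exists zero, zero; repeat split; now rewrite ?(add0r group).
Qed.

Lemma tcompD u v :
  tcomp add a b x y z u -> tcomp add a b x y z v -> tcomp add a b x y z (add u v).
Proof.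
  destruct a_subgroup as [_ [aD _]], b_subgroup as [_ [bD _]],
    x_subgroup as [_ [xD _]], y_subgroup as [_ [yD _]], z_subgroup as [_ [zD _]].
  intros [a1 [b1 [ha1 [hb1 [-> [a1' [b1' [ha1' [hb1' [hy1 [hx1 hz1]]]]]]]]]]]
         [a2 [b2 [ha2 [hb2 [-> [a2' [b2' [ha2' [hb2' [hy2 [hx2 hz2]]]]]]]]]]].
  assert (swap : forall p q r s, b q -> a r ->
            add (add p q) (add r s) = add (add p r) (add q s)).
  { intros p q r s hq hr. apply (add_interchange group). symmetry. auto. }
  exists (add a1 a2), (add b1 b2); repeat split; auto.
  exists (add a1' a2'), (add b1' b2'); repeat split; auto;
    rewrite <- swap; auto.
Qed.

Lemma tcompN u : tcomp add a b x y z u -> tcomp add a b x y z (opp u).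
Proof.
  destruct a_subgroup as [_ [_ aN]], b_subgroup as [_ [_ bN]],
    x_subgroup as [_ [_ xN]], y_subgroup as [_ [_ yN]], z_subgroup as [_ [_ zN]].
  intros [al [be [ha [hb [-> [al' [be' [ha' [hb' [hy [hx hz]]]]]]]]]]].
  assert (oppD_ab : forall p q, a p -> b q -> opp (add p q) = add (opp p) (opp q)).
  { intros p q hp hq. apply (oppD_comm group). auto. }
  exists (opp al), (opp be); repeat split; auto.
  exists (opp al'), (opp be'); repeat split; auto; rewrite <- oppD_ab; auto.
Qed.

Lemma tcomp_subgroup : is_subgroup add zero opp (tcomp add a b x y z).
Proof. split; [apply tcomp0 | split; [apply tcompD | apply tcompN]]. Qed.

End TernaryComposition.

Theorem theorem4p1 (T : Type) (add : T -> T -> T) (zero : T) (opp : T -> T)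
  (a b : T -> Prop) :
  is_group add zero opp ->
  is_subgroup add zero opp a -> is_subgroup add zero opp b ->
  top add a b ->
  (forall x y z : T -> Prop, tcomp add a b x y z = Gamma add x a y b z) /\
  ((forall al be, a al -> b be -> add al be = add be al) ->
   forall x y z : T -> Prop,
     is_subgroup add zero opp x -> is_subgroup add zero opp y ->
     is_subgroup add zero opp z ->
     is_subgroup add zero opp (tcomp add a b x y z)).
Proof.
  intros group a_subgroup b_subgroup Htop. split.
  - intros x y z. eapply tcompE; eauto.
  - intros commute x y z. eapply tcomp_subgroup; eauto.
Qed.
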